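(* Let $A\in\mathfrak{B}_{n\times m}$ be a semi-canonical matrix with $r(A)=\langle x_1,\dots,x_n\rangle$ and $c(A)=\langle y_1,\dots,y_m\rangle$. Then there exist integers $s,t$ with $0\le s\le m$, $0\le t\le n$ such that $x_1=2^s-1$ and $y_1=2^t-1$.
   Context: $\mathfrak{B}_{n\times m}$ denotes the set of all $n\times m$ matrices with entries in $\{0,1\}$. For $A=[a_{ij}]\in\mathfrak{B}_{n\times m}$, $r(A)=\langle x_1,\dots,x_n\rangle$ with $x_i=\sum_{j=1}^m a_{ij}2^{m-j}$ and $c(A)=\langle y_1,\dots,y_m\rangle$ with $y_j=\sum_{i=1}^n a_{ij}2^{n-i}$. $A$ is semi-canonical if $x_1\le x_2\le\cdots\le x_n$ and $y_1\le y_2\le\cdots\le y_m$. *)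

From mathcomp Require Import all_boot all_algebra.
Set Implicit Arguments. Unset Strict Implicit. Unset Printing Implicit Defensive.

(* A binary n x m matrix: entries in {0,1}, represented by bool
   (true = 1, false = 0). Indices are 0-based: paper row i = ordinal i-1. *)
Definition binmx (n m : nat) := 'M[bool]_(n, m).

(* x_i = sum_j a_ij 2^(m-j) with 1-based j; with 0-based j : 'I_m this is 2^(m - (j+1)). *)
Definition rowval n m (A : binmx n m) (i : 'I_n) : nat :=
  \sum_(j < m) (A i j : nat) * 2 ^ (m - j.+1).

Definition colval n m (A : binmx n m) (j : 'I_m) : nat :=
  \sum_(i < n) (A i j : nat) * 2 ^ (n - i.+1).

Definition semi_canonical n m (A : binmx n m) : Prop :=
  (forall i1 i2 : 'I_n, (i1 <= i2)%N -> (rowval A i1 <= rowval A i2)%N) /\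
  (forall j1 j2 : 'I_m, (j1 <= j2)%N -> (colval A j1 <= colval A j2)%N).

From mathcomp Require Import all_boot all_algebra.
From mathcomp Require Import zify.

Set Implicit Arguments.
Unset Strict Implicit.
Unset Printing Implicit Defensive.

(** The leading bit of each column value [y_j] is the entry of the first row
    in column [j]; since a k-bit number with leading bit 1 exceeds every one
    with leading bit 0, nondecreasing column values force the first row to be
    of the form 0...01...1, i.e. [x_1 = 2^s - 1].  The same argument with rows
    and columns exchanged gives [y_1 = 2^t - 1]. *)

Definition binval k (b : 'I_k -> bool) : nat :=
  \sum_(i < k) b i * 2 ^ (k - i.+1).

Lemma binval_recl k (b : 'I_k.+1 -> bool) :
  binval b = b ord0 * 2 ^ k + binval (fun i => b (lift ord0 i)).
Proof. by rewrite /binval big_ord_recl subn1. Qed.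

Lemma binval_lt k (b : 'I_k -> bool) : binval b < 2 ^ k.
Proof.
elim: k b => [|k IHk] b; first by rewrite /binval big_ord0.
rewrite binval_recl expnS; have := IHk (fun i => b (lift ord0 i)).
by case: (b ord0) => /=; lia.
Qed.

Lemma binval_all1 k (b : 'I_k -> bool) : (forall i, b i) -> binval b = 2 ^ k - 1.
Proof.
elim: k b => [|k IHk] b b1; first by rewrite /binval big_ord0.
rewrite binval_recl b1 IHk // expnS; have := expn_gt0 2 k; lia.
Qed.

Lemma binval_sorted k (b : 'I_k -> bool) :
  (forall i j : 'I_k, i <= j -> b i -> b j) ->
  exists s, s <= k /\ binval b = 2 ^ s - 1.
Proof.
elim: k b => [|k IHk] b b_sorted; first by exists 0; rewrite /binval big_ord0.
case b0: (b ord0).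
  exists k.+1; split=> //; apply: binval_all1 => i; exact: (b_sorted ord0).
have [|s [le_sk tail_val]] := IHk (fun i => b (lift ord0 i)).
  by move=> i j le_ij; apply: b_sorted.
by exists s; split; [apply: leqW | rewrite binval_recl b0 tail_val].
Qed.

Lemma binval_head_mono k (b c : 'I_k.+1 -> bool) :
  binval b <= binval c -> b ord0 -> c ord0.
Proof.
rewrite !binval_recl => le_bc b0; apply/negPn/negP=> /negbTE c0.
move: le_bc; rewrite b0 c0 /=.
have := binval_lt (fun i : 'I_k => c (lift ord0 i)); lia.
Qed.

Lemma binval_heads_sorted k l (b : 'I_k -> 'I_l.+1 -> bool) :
  (forall i j : 'I_k, i <= j -> binval (b i) <= binval (b j)) ->
  exists s, s <= k /\ binval (fun i => b i ord0) = 2 ^ s - 1.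
Proof.
move=> b_sorted; apply: binval_sorted => i j le_ij.
exact/binval_head_mono/b_sorted.
Qed.

Theorem corollary1 (n m : nat) (A : binmx n.+1 m.+1) :
  semi_canonical A ->
  exists s t : nat, (s <= m.+1)%N /\ (t <= n.+1)%N /\
    rowval A ord0 = (2 ^ s - 1)%N /\ colval A ord0 = (2 ^ t - 1)%N.
Proof.
move=> [rows_sorted cols_sorted].
have [s [le_s row0]] := binval_heads_sorted cols_sorted.
have [t [le_t col0]] := binval_heads_sorted rows_sorted.
by exists s, t.
Qed.
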